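(* Every unbounded moral-hazard preference $\succeq$ on $W$ admits exactly one parsimonious representation $(c,u)$.
   Context: $S$ non-empty finite, $\Delta(S)$ its simplex; $\Pi\subseteq\mathbb{R}$ convex; $\Delta(\Pi)$ finite-support distributions on $\Pi$; contracts $w:S\to\Delta(\Pi)$, set $W$; constant contracts identified with elements of $\Delta(\Pi)$. Mixtures $\alpha x+(1-\alpha)x'$ are probability mixtures. $u:\Pi\to\mathbb{R}$ extends to $\Delta(\Pi)$ by expectation. Fixed reference prizes $\pi_0<\pi_1$ in $\Pi$; $u$ is normalised iff $\{u(\pi_0),u(\pi_1)\}=\{0,1\}$. Grounded: infimum $0$. A parsimonious representation of $\succeq$ is a pair $(c,u)$ with $c:\Delta(S)\to[0,\infty]$ grounded, convex and lower semi-continuous and $u:\Pi\to\mathbb{R}$ strictly increasing and normalised, such that for all $w,w'\in W$: $w\succeq w'$ iff $\max_{p\in\Delta(S)}[-c(p)+\sum_s u(w(s))p(s)]\ge \max_{p\in\Delta(S)}[-c(p)+\sum_s u(w'(s))p(s)]$. A moral-hazard preference is a relation generated by a standard moral-hazard model (compact convex effort set $E\subseteq\mathbb{R}^n$, grounded lsc cost $C:E\to\mathbb{R}_+$, continuous $e\mapsto P_e\in\Delta(S)$, strictly increasing normalised $u$, agent valuing $w$ by $\sup_{\mu\in\Delta(E)}\int_E[-C(e)+\sum_s u(w(s))P_e(s)]\mu(\mathrm{d}e)$); equivalently, a relation admitting some parsimonious representation. $\succeq$ is unbounded iff there are $x\succ y$ in $\Delta(\Pi)$ such that for every $\alpha\in(0,1)$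 there exist $z,z'\in\Delta(\Pi)$ with $y\succ \alpha z+(1-\alpha)x$ and $\alpha z'+(1-\alpha)y\succ x$ (where $\succ$ is the strict part of $\succeq$). *)

From HB Require Import structures.
From mathcomp Require Import all_boot all_order all_algebra.
From mathcomp Require Import boolp classical_sets functions cardinality fsbigop reals constructive_ereal ereal.
Set Implicit Arguments. Unset Strict Implicit. Unset Printing Implicit Defensive.
Import Order.TTheory GRing.Theory Num.Theory.
Local Open Scope classical_set_scope.
Local Open Scope ring_scope.

Section MH.
Variables (R : realType) (S : finType).

(* A (raw) lottery is a function prize |-> probability; a mh_contract assigns a
   lottery to every state. *)
Definition lottery := R -> R.
Definition mh_contract := S -> lottery.

Definition lsupp (f : lottery) : set R := [set x | f x != 0].

Definition is_lottery (Pi : set R) (f : lottery) : Prop :=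
  [/\ forall x, 0 <= f x,
      finite_set (lsupp f),
      lsupp f `<=` Pi &
      \sum_(x \in lsupp f) f x = 1].

Definition is_contract (Pi : set R) (w : mh_contract) : Prop :=
  forall s, is_lottery Pi (w s).

Definition const_contract (x : lottery) : mh_contract := fun _ => x.

Definition mix (a : R) (x x' : lottery) : lottery := fun p => a * x p + (1 - a) * x' p.

Definition EU (u : R -> R) (f : lottery) : R := \sum_(x \in lsupp f) f x * u x.

Definition simplex (p : S -> R) : Prop := (forall s, 0 <= p s) /\ \sum_s p s = 1.

Definition convex_set_R (Pi : set R) : Prop :=
  forall x y z, Pi x -> Pi y -> x <= z -> z <= y -> Pi z.

Definition cost_nonneg (c : (S -> R) -> \bar R) : Prop :=
  forall p, simplex p -> (0 <= c p)%E.

Definition grounded (c : (S -> R) -> \bar R) : Prop :=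
  ereal_inf [set c p | p in simplex] = 0%E.

Definition cost_convex (c : (S -> R) -> \bar R) : Prop :=
  forall p q (a : R), simplex p -> simplex q -> 0 < a -> a < 1 ->
    (c (fun s => (a * p s + (1 - a) * q s)%R) <= a%:E * c p + (1 - a)%:E * c q)%E.

Definition cost_lsc (c : (S -> R) -> \bar R) : Prop :=
  forall p (a : R), simplex p -> (a%:E < c p)%E ->
    exists2 eps : R, 0 < eps &
      forall q, simplex q -> (forall s, `|q s - p s| < eps) -> (a%:E < c q)%E.

Definition strictly_increasing_on (Pi : set R) (u : R -> R) : Prop :=
  forall x y, Pi x -> Pi y -> x < y -> u x < u y.

Definition normalised (pi0 pi1 : R) (u : R -> R) : Prop :=
  (u pi0 = 0 /\ u pi1 = 1) \/ (u pi0 = 1 /\ u pi1 = 0).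

Definition value (c : (S -> R) -> \bar R) (u : R -> R) (w : mh_contract) : \bar R :=
  ereal_sup [set (- c p + (\sum_s EU u (w s) * p s)%:E)%E | p in simplex].

Definition parsimonious_rep (Pi : set R) (pi0 pi1 : R)
    (pref : mh_contract -> mh_contract -> Prop)
    (c : (S -> R) -> \bar R) (u : R -> R) : Prop :=
  [/\ cost_nonneg c /\ grounded c /\ cost_convex c /\ cost_lsc c,
      strictly_increasing_on Pi u, normalised pi0 pi1 u &
      forall w w', is_contract Pi w -> is_contract Pi w' ->
        (pref w w' <-> (value c u w' <= value c u w)%E)].

Definition moral_hazard_pref (Pi : set R) (pi0 pi1 : R)
    (pref : mh_contract -> mh_contract -> Prop) : Prop :=
  exists c u, parsimonious_rep Pi pi0 pi1 pref c u.

Definition spref (pref : mh_contract -> mh_contract -> Prop) (w w' : mh_contract) : Prop :=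
  pref w w' /\ ~ pref w' w.

Definition unbounded (Pi : set R) (pref : mh_contract -> mh_contract -> Prop) : Prop :=
  exists x y, [/\ is_lottery Pi x, is_lottery Pi y,
    spref pref (const_contract x) (const_contract y) &
    forall a : R, 0 < a -> a < 1 ->
      exists z z', [/\ is_lottery Pi z, is_lottery Pi z',
        spref pref (const_contract y) (const_contract (mix a z x)) &
        spref pref (const_contract (mix a z' y)) (const_contract x)]].

End MH.

(* Restricted to constant contracts, a parsimonious representation (c, u) ranks
   lotteries by expected u-utility, so u is a von Neumann-Morgenstern utility,
   pinned down on Pi by the normalisation.  Unboundedness makes expected utility
   onto R, hence every utility profile U : S -> R is the profile of a contract.
   If two representing costs had c1 p < a < c2 p, the convex lower semicontinuous
   c2 would have an affine minorant q |-> a + U.(q - p): a subgradient at p of its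
   Pasch-Hausdorff regularisation x |-> inf_q c2 q + k |x - q|_1, which is finite
   and convex on all of R^S.  The contract with profile U is then worth at most
   U.p - a under c2 but more than U.p - a under c1, so the two costs rank it
   differently against a constant lottery of expected utility U.p - a. *)

From mathcomp Require Import all_boot all_order all_algebra.
From mathcomp Require Import boolp classical_sets cardinality fsbigop reals constructive_ereal ereal.
From mathcomp Require Import ring lra.
Import Order.TTheory GRing.Theory Num.Theory.
Local Open Scope classical_set_scope.
Local Open Scope ring_scope.
Set Implicit Arguments. Unset Strict Implicit.

Section Lotteries.
Variables (R : realType) (Pi : set R).
Implicit Types (u : R -> R) (x : R) (z : lottery R).

Lemma fsbig_lsupp_widen z (A : set R) (F : R -> R) :
  lsupp z `<=` A -> (forall y, z y = 0 -> F y = 0) ->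
  \sum_(y \in lsupp z) F y = \sum_(y \in A) F y.
Proof.
move=> zA F0; apply: fsbig_widen => // y [_] /=.
by rewrite /lsupp /= => /negP; rewrite negbK => /eqP /F0.
Qed.

Definition dirac x : lottery R := fun y => if y == x then 1 else 0.

Lemma lsupp_dirac x : lsupp (dirac x) = [set x].
Proof.
apply/seteqP; split => y; rewrite /lsupp /dirac /=.
  by case: ifP => [/eqP //|_]; rewrite eqxx.
by move=> ->; rewrite eqxx oner_neq0.
Qed.

Lemma dirac_lottery x : Pi x -> is_lottery Pi (dirac x).
Proof.
move=> Px; rewrite /is_lottery lsupp_dirac; split.
- by move=> y; rewrite /dirac; case: eqP.
- exact: finite_set1.
- by move=> y ->.
- by rewrite fsbig_set1 /dirac eqxx.
Qed.

Lemma EU_dirac u x : EU u (dirac x) = u x.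
Proof. by rewrite /EU lsupp_dirac fsbig_set1 /dirac eqxx mul1r. Qed.

Lemma lsupp_mix a z z' : lsupp (mix a z z') `<=` lsupp z `|` lsupp z'.
Proof.
move=> y; rewrite /lsupp /mix /=; apply: contraPP => /not_orP[/negP zy /negP z'y].
by move: zy z'y; rewrite !negbK => /eqP -> /eqP ->; rewrite !mulr0 addr0 eqxx.
Qed.

Lemma EU_mix u a z z' : finite_set (lsupp z) -> finite_set (lsupp z') ->
  EU u (mix a z z') = a * EU u z + (1 - a) * EU u z'.
Proof.
move=> zf z'f.
have zA : lsupp z `<=` lsupp z `|` lsupp z' by move=> y; left.
have z'A : lsupp z' `<=` lsupp z `|` lsupp z' by move=> y; right.
rewrite /EU !(fsbig_lsupp_widen (@lsupp_mix a z z'), fsbig_lsupp_widen zA,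
  fsbig_lsupp_widen z'A) => [|y ->|y ->|y ->]; rewrite ?mul0r //.
rewrite !mulr_fsumr -fsbig_split ?finite_setU //.
by apply: eq_fsbigr => y _; rewrite /mix /=; ring.
Qed.

Lemma lottery_finite z : is_lottery Pi z -> finite_set (lsupp z).
Proof. by case. Qed.

Lemma mix_lottery a z z' : 0 <= a <= 1 -> is_lottery Pi z -> is_lottery Pi z' ->
  is_lottery Pi (mix a z z').
Proof.
move=> /andP[a0 a1] [z0 zf zP z1] [z'0 z'f z'P z'1].
have EU_one z'' : EU (fun=> 1) z'' = \sum_(y \in lsupp z'') z'' y.
  by apply: eq_fsbigr => y _; rewrite mulr1.
split.
- by move=> y; rewrite /mix addr_ge0 // mulr_ge0 // subr_ge0.
- by apply: sub_finite_set (@lsupp_mix a z z') _; rewrite finite_setU.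
- by move=> y /lsupp_mix [/zP|/z'P].
- by rewrite -EU_one EU_mix // !EU_one z1 z'1; ring.
Qed.

Lemma eq_EU_on u1 u2 z : (forall x, Pi x -> u1 x = u2 x) -> is_lottery Pi z ->
  EU u1 z = EU u2 z.
Proof. by move=> eu [_ _ zP _]; apply: eq_fsbigr => y; rewrite inE => /zP /eu ->. Qed.

Lemma EU_mix_between u z1 z2 (V : R) : is_lottery Pi z1 -> is_lottery Pi z2 ->
  EU u z1 <= V <= EU u z2 -> exists2 z, is_lottery Pi z & EU u z = V.
Proof.
move=> h1 h2 /andP[lo hi]; have [_ f1 _ _] := h1; have [_ f2 _ _] := h2.
have [le21|lt12] := leP (EU u z2) (EU u z1).
  by exists z1 => //; apply/le_anti; rewrite lo (le_trans hi le21).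
set b := (EU u z2 - V) / (EU u z2 - EU u z1).
have d0 : 0 < EU u z2 - EU u z1 by rewrite subr_gt0.
have bd : b * (EU u z2 - EU u z1) = EU u z2 - V by rewrite /b mulfVK // gt_eqF.
have b01 : 0 <= b <= 1 by apply/andP; split; nra.
exists (mix b z1 z2); first exact: mix_lottery.
by rewrite EU_mix //; lra.
Qed.

End Lotteries.

Lemma fin_lt_between (R : realType) (r : R) (y : \bar R) : (r%:E < y)%E ->
  exists2 a, r < a & (a%:E < y)%E.
Proof.
case: y => [y| |] //; last by exists (r + 1); rewrite ?ltry //; lra.
by rewrite lte_fin => ry; exists ((r + y) / 2); rewrite ?lte_fin; lra.
Qed.

Section Values.
Variables (R : realType) (S : finType).
Implicit Types (c : (S -> R) -> \bar R) (u : R -> R) (p q : S -> R).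

Lemma sum_const_simplex (e : R) p : simplex p -> \sum_s e * p s = e.
Proof. by move=> [_ p1]; rewrite -mulr_sumr p1 mulr1. Qed.

Lemma simplex_mix q1 q2 (l : R) : simplex q1 -> simplex q2 -> 0 <= l <= 1 ->
  simplex (fun s => l * q1 s + (1 - l) * q2 s).
Proof.
move=> [q10 q11] [q20 q21] /andP[l0 l1]; split.
  by move=> s; rewrite addr_ge0 // mulr_ge0 // ?subr_ge0.
by rewrite big_split /= -!mulr_sumr q11 q21; ring.
Qed.

Lemma grounded_lt c (e : R) : grounded c -> 0 < e -> exists2 p, simplex p & (c p < e%:E)%E.
Proof.
move=> g e0; have : (ereal_inf [set c p | p in @simplex R S] < e%:E)%E by rewrite g lte_fin.
by move=> /ereal_inf_lt [_ [p Sp <-] lt]; exists p.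
Qed.

Lemma grounded_proper c : grounded c -> exists2 q, simplex q & (c q < +oo)%E.
Proof.
move=> g; have [q Sq cq] := grounded_lt g ltr01.
by exists q => //; apply: lt_trans cq (ltry _).
Qed.

Lemma value_ge c u (w : mh_contract R S) p : simplex p ->
  (- c p + (\sum_s EU u (w s) * p s)%:E <= value c u w)%E.
Proof. by move=> Sp; apply: ereal_sup_ubound; exists p. Qed.

Lemma value_const c u (z : lottery R) : cost_nonneg c -> grounded c ->
  value c u (@const_contract R S z) = (EU u z)%:E.
Proof.
move=> c0 g; apply/le_anti/andP; split.
  apply: ge_ereal_sup => _ [p Sp <-].
  by rewrite /const_contract sum_const_simplex // geeDr // leeNl oppe0 c0.
apply/lee_subgt0Pr => e e0; have [p Sp cp] := grounded_lt g e0.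
apply: le_trans (value_ge _ _ _ Sp); rewrite /const_contract sum_const_simplex //.
by move: (c0 p Sp) cp; case: (c p) => [r| |] //; rewrite !lee_fin lte_fin; lra.
Qed.

Lemma value_le_affine_minorant c u (w : mh_contract R S) (U p : S -> R) (a : R) :
  (forall q, simplex q -> ((a + \sum_s U s * (q s - p s))%:E <= c q)%E) ->
  (forall s, EU u (w s) = U s) -> (value c u w <= (\sum_s U s * p s - a)%:E)%E.
Proof.
move=> minor ew; apply: ge_ereal_sup => _ [q Sq <-].
under eq_bigr do rewrite ew.
have := minor q Sq; case: (c q) => [r| |] //=; last by rewrite leNye.
have -> : \sum_s U s * (q s - p s) = \sum_s U s * q s - \sum_s U s * p s.
  by rewrite -sumrB; apply: eq_bigr => s _; rewrite mulrBr.
by rewrite -EFinD !lee_fin; lra.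
Qed.



End Values.

Section Subgradient.
Variables (R : realType) (S : finType) (f : (S -> R) -> R).
Hypothesis f_convex : forall (x y : S -> R) (l : R), 0 < l -> l < 1 ->
  f (fun s => l * x s + (1 - l) * y s) <= l * f x + (1 - l) * f y.
Variable p : S -> R.

Definition supported (r : seq S) (h : S -> R) := forall s, s \notin r -> h s = 0.

Definition subgradient_on (r : seq S) (U : S -> R) :=
  forall h, supported r h -> f p + \sum_s U s * h s <= f (fun s => p s + h s).

Section Extension.
Variables (r : seq S) (U : S -> R) (s0 : S).
Hypothesis U_subgradient : subgradient_on r U.

Let shift (v : S -> R) (t : R) := fun s => p s + v s + t * (s == s0)%:R.
Let gap (v : S -> R) (t : R) := f (shift v t) - f p - \sum_s U s * v s.

Lemma gap_slope_le v v' rho sig : supported r v -> supported r v' ->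
  0 < rho -> 0 < sig -> - gap v' (- rho) / rho <= gap v sig / sig.
Proof.
move=> rv rv' rho0 sig0.
have rs0 : 0 < rho + sig by rewrite addr_gt0.
set l := rho / (rho + sig).
have l0 : 0 < l by rewrite divr_gt0.
have l1 : l < 1 by rewrite ltr_pdivrMr // mul1r ltrDl.
set w := fun s => l * v s + (1 - l) * v' s.
have rw : supported r w by move=> s sr; rewrite /w rv // rv' // !mulr0 addr0.
have shift_w : (fun s => l * shift v sig s + (1 - l) * shift v' (- rho) s) =
               (fun s => p s + w s).
  by apply/funext => s; rewrite /shift /w /l; field; rewrite gt_eqF.
have := f_convex (shift v sig) (shift v' (- rho)) l0 l1; rewrite shift_w.
have := U_subgradient rw.
have -> : \sum_s U s * w s = l * \sum_s U s * v s + (1 - l) * \sum_s U s * v' s.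
  by rewrite !mulr_sumr -big_split; apply: eq_bigr => s _; rewrite /w /=; ring.
move=> hw hconv.
have comb : 0 <= rho * gap v sig + sig * gap v' (- rho).
  have -> : rho * gap v sig + sig * gap v' (- rho) =
    (rho + sig) * (l * gap v sig + (1 - l) * gap v' (- rho)).
    by rewrite /l; field; rewrite gt_eqF.
  by rewrite mulr_ge0 ?(ltW rs0) // /gap; lra.
rewrite -subr_ge0.
have -> : gap v sig / sig - - gap v' (- rho) / rho =
  (rho * gap v sig + sig * gap v' (- rho)) / (rho * sig).
  by field; rewrite !gt_eqF.
by rewrite divr_ge0 // mulr_ge0 ?ltW.
Qed.

(* Hahn-Banach step: the new coordinate is the supremum of the left slopes along
   the s0-th basis vector, which [gap_slope_le] bounds by every right slope. *)
Lemma subgradient_on_cons : exists U', subgradient_on (s0 :: r) U'.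
Proof.
pose lower := [set x | exists v rho, [/\ supported r v, 0 < rho & x = - gap v (- rho) / rho]].
have lower_ub v sig : supported r v -> 0 < sig -> ubound lower (gap v sig / sig).
  by move=> rv sig0 _ [v' [rho [rv' rho0 ->]]]; exact: gap_slope_le.
have r0 : supported r (fun=> 0) by [].
have lower_ne : lower !=set0 by exists (- gap (fun=> 0) (- 1) / 1), (fun=> 0), 1.
have lower_bd : has_ubound lower by exists (gap (fun=> 0) 1 / 1); exact: lower_ub.
set alpha := sup lower.
exists (fun s => if s == s0 then alpha else U s) => h hsupp.
pose v s := if s == s0 then 0 else h s.
have rv : supported r v.
  move=> s sr; rewrite /v; case: eqP => // /eqP ns; apply: hsupp.
  by rewrite in_cons negb_or ns.
have -> : (fun s => p s + h s) = shift v (h s0).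
  apply/funext => s; rewrite /shift /v; case: eqP => [->|_].
    by rewrite mulr1 addr0.
  by rewrite mulr0 addr0.
have -> : \sum_s (if s == s0 then alpha else U s) * h s = alpha * h s0 + \sum_s U s * v s.
  rewrite (bigD1 s0) //= [X in _ = _ + X](bigD1 s0) //= !eqxx /v eqxx mulr0 add0r.
  by congr (_ + _); apply: eq_bigr => s /negPf ->.
suff : alpha * h s0 <= gap v (h s0) by rewrite /gap; lra.
have [t0|t0|t0] := ltgtP (h s0) 0.
- have : - gap v (- - h s0) / - h s0 <= alpha.
    by apply: ub_le_sup => //; exists v, (- h s0); rewrite oppr_gt0.
  by rewrite opprK ler_pdivrMr ?oppr_gt0 // mulrN; lra.
- have : alpha <= gap v (h s0) / h s0 by apply: ge_sup => //; exact: lower_ub.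
  by rewrite ler_pdivlMr // mulrC.
- have := U_subgradient rv; rewrite t0 mulr0 /gap.
  have -> : shift v 0 = (fun s => p s + v s).
    by apply/funext => s; rewrite /shift mul0r addr0.
  lra.
Qed.

End Extension.

Lemma subgradient_on_seq r : exists U, subgradient_on r U.
Proof.
elim: r => [|s0 r [U hU]]; last exact: subgradient_on_cons s0 hU.
exists (fun=> 0) => h h0.
rewrite big1 ?addr0 => [|s _]; last by rewrite mul0r.
by have -> : (fun s => p s + h s) = p by apply/funext => s; rewrite h0 ?addr0.
Qed.

Lemma convex_subgradient : exists U : S -> R, forall h : S -> R,
  f p + \sum_s U s * h s <= f (fun s => p s + h s).
Proof.
have [U hU] := subgradient_on_seq (enum S).
by exists U => h; apply: hU => s; rewrite mem_enum.
Qed.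

End Subgradient.

Section Envelope.
Variables (R : realType) (S : finType) (c : (S -> R) -> \bar R).
Hypotheses (c_ge0 : cost_nonneg c) (c_convex : cost_convex c).
Hypothesis c_proper : exists2 q, simplex q & (c q < +oo)%E.
Implicit Types (p q x y : S -> R).

Definition cost_dom q := simplex q /\ (c q < +oo)%E.

(* Pasch-Hausdorff regularisation of [c] with Lipschitz constant [k]; the infimum
   ranges over [cost_dom] because [fine] sends [+oo] to [0]. *)
Definition envelope (k : R) x :=
  inf [set fine (c q) + k * \sum_s `|x s - q s| | q in cost_dom].

Lemma cost_fineK q : cost_dom q -> c q = (fine (c q))%:E.
Proof. by move=> [Sq cq]; rewrite fineK // ge0_fin_numE // c_ge0. Qed.

Section Fixed_k.
Variable k : R.
Hypothesis k_ge0 : 0 <= k.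

Lemma envelope_le x q : cost_dom q ->
  envelope k x <= fine (c q) + k * \sum_s `|x s - q s|.
Proof.
move=> dq; apply: ge_inf; last by exists q.
exists 0 => _ [q' [Sq' _] <-].
by rewrite addr_ge0 ?fine_ge0 ?c_ge0 // mulr_ge0 // sumr_ge0.
Qed.

Lemma envelope_ge x (m : R) :
  (forall q, cost_dom q -> m <= fine (c q) + k * \sum_s `|x s - q s|) -> m <= envelope k x.
Proof.
move=> H; apply: lb_le_inf => [|_ [q dq <-]]; last exact: H.
by have [q Sq cq] := c_proper; exists (fine (c q) + k * \sum_s `|x s - q s|), q.
Qed.

Lemma envelope_le_cost q : simplex q -> ((envelope k q)%:E <= c q)%E.
Proof.
move=> Sq; have [cq|] := ltP (c q) +oo%E; last by rewrite leye_eq => /eqP ->; rewrite leey.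
rewrite (cost_fineK (conj Sq cq)) lee_fin.
apply: le_trans (envelope_le q (conj Sq cq)) _.
by rewrite big1 ?mulr0 ?addr0 // => s _; rewrite subrr normr0.
Qed.

Lemma envelope_mix_le x y q1 q2 (l : R) : 0 < l -> l < 1 -> cost_dom q1 -> cost_dom q2 ->
  envelope k (fun s => l * x s + (1 - l) * y s) <=
    l * (fine (c q1) + k * \sum_s `|x s - q1 s|) +
    (1 - l) * (fine (c q2) + k * \sum_s `|y s - q2 s|).
Proof.
move=> l0 l1 d1 d2; have [S1 _] := d1; have [S2 _] := d2.
have cq := c_convex S1 S2 l0 l1.
set q := fun s => l * q1 s + (1 - l) * q2 s in cq *.
have Sq : simplex q by apply: simplex_mix => //; rewrite !ltW.
rewrite (cost_fineK d1) (cost_fineK d2) -!EFinM -EFinD in cq.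
have domq : cost_dom q by split => //; apply: le_lt_trans cq _; rewrite ltry.
rewrite (cost_fineK domq) lee_fin in cq.
have dist : \sum_s `|l * x s + (1 - l) * y s - q s| <=
    l * \sum_s `|x s - q1 s| + (1 - l) * \sum_s `|y s - q2 s|.
  rewrite !mulr_sumr -big_split /=; apply: ler_sum => s _.
  rewrite (_ : _ - q s = l * (x s - q1 s) + (1 - l) * (y s - q2 s)); last by rewrite /q; ring.
  apply: le_trans (ler_normD _ _) _.
  have l1' : 0 <= 1 - l by rewrite subr_ge0 ltW.
  by rewrite !normrM (ger0_norm (ltW l0)) (ger0_norm l1').
apply: le_trans (envelope_le _ domq) _.
have := ler_wpM2l k_ge0 dist; lra.
Qed.

Lemma envelope_convex x y (l : R) : 0 < l -> l < 1 ->
  envelope k (fun s => l * x s + (1 - l) * y s) <= l * envelope k x + (1 - l) * envelope k y.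
Proof.
move=> l0 l1; set e := envelope k _.
have l1' : 0 < 1 - l by rewrite subr_gt0.
suff : (e - l * envelope k x) / (1 - l) <= envelope k y by rewrite ler_pdivrMr //; lra.
apply: envelope_ge => q2 d2; rewrite ler_pdivrMr // mulrC.
suff : (e - (1 - l) * (fine (c q2) + k * \sum_s `|y s - q2 s|)) / l <= envelope k x.
  by rewrite ler_pdivrMr //; lra.
apply: envelope_ge => q1 d1; rewrite ler_pdivrMr // mulrC.
by have := envelope_mix_le x y l0 l1 d1 d2; lra.
Qed.

End Fixed_k.

Hypothesis c_lsc : cost_lsc c.

Lemma envelope_ge_lsc p (a : R) : simplex p -> (a%:E < c p)%E ->
  exists2 k, 0 <= k & a <= envelope k p.
Proof.
move=> Sp ap; have [e e0 near_gt] := c_lsc Sp ap.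
set k := (`|a| + 1) / e.
have k0 : 0 <= k by rewrite divr_ge0 ?ltW // addr_ge0.
exists k => //; apply: envelope_ge => q dq; have [Sq _] := dq.
have cq0 : 0 <= fine (c q) by rewrite fine_ge0 // c_ge0.
have dist0 : 0 <= \sum_s `|p s - q s| by rewrite sumr_ge0.
have [near|/existsNP[s /negP]] := pselect (forall s, `|q s - p s| < e).
  have := near_gt q Sq near; rewrite (cost_fineK dq) lte_fin.
  by have := mulr_ge0 k0 dist0; lra.
rewrite -leNgt distrC => eqp.
have : `|p s - q s| <= \sum_s `|p s - q s| by rewrite (bigD1 s) //= lerDl sumr_ge0.
move=> /(le_trans eqp) /(ler_wpM2l k0); rewrite /k mulfVK ?gt_eqF //.
by have := ler_norm a; lra.
Qed.

Lemma affine_minorant p (a : R) : simplex p -> (a%:E < c p)%E ->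
  exists U : S -> R, forall q, simplex q -> ((a + \sum_s U s * (q s - p s))%:E <= c q)%E.
Proof.
move=> Sp ap; have [k k0 akp] := envelope_ge_lsc Sp ap.
have [U hU] := convex_subgradient (envelope_convex k0) p.
exists U => q Sq; apply: le_trans (envelope_le_cost k0 Sq); rewrite lee_fin.
have := hU (fun s => q s - p s).
have -> : (fun s => p s + (q s - p s)) = q by apply/funext => s; rewrite addrC subrK.
lra.
Qed.

End Envelope.

Lemma exists_weight_lt (R : realType) (M D : R) : 0 < D ->
  exists a, [/\ 0 < a, a < 1 & a * M < D].
Proof.
move=> D0; set k := D + `|M| + 1; set a := D / k.
have k0 : 0 < k by rewrite /k; have := normr_ge0 M; lra.
have ak : a * k = D by rewrite /a mulfVK // gt_eqF.
have a0 : 0 < a by rewrite /a divr_gt0.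
exists a; split => //; first by rewrite /a ltr_pdivrMr // mul1r /k; have := normr_ge0 M; lra.
have := ler_wpM2l (ltW a0) (ler_norm M); rewrite /k in ak; nra.
Qed.

Section Representation.
Variables (R : realType) (S : finType) (Pi : set R) (pi0 pi1 : R)
  (pref : mh_contract R S -> mh_contract R S -> Prop).
Hypotheses (Pi0 : Pi pi0) (Pi1 : Pi pi1) (lt01 : pi0 < pi1).
Local Notation rep := (parsimonious_rep Pi pi0 pi1 pref).
Local Notation cst := (@const_contract R S).
Implicit Types (c : (S -> R) -> \bar R) (u : R -> R) (z : lottery R).

Lemma const_contract_is_contract z : is_lottery Pi z -> is_contract Pi (cst z).
Proof. by move=> hz s. Qed.

Lemma rep_const c u z z' : rep c u -> is_lottery Pi z -> is_lottery Pi z' ->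
  (pref (cst z) (cst z') <-> EU u z' <= EU u z).
Proof.
move=> [[c0 [g _]] _ _ r] hz hz'.
by rewrite r ?const_contract_is_contract // !value_const // lee_fin.
Qed.

Lemma rep_const_strict c u z z' : rep c u -> is_lottery Pi z -> is_lottery Pi z' ->
  (spref pref (cst z) (cst z') <-> EU u z' < EU u z).
Proof.
move=> r hz hz'; rewrite /spref (rep_const r hz hz') (rep_const r hz' hz).
split=> [[_ /negP]|?]; first by rewrite ltNge.
by split; [exact: ltW | apply/negP; rewrite -ltNge].
Qed.

Lemma rep_normalised c u : rep c u -> u pi0 = 0 /\ u pi1 = 1.
Proof.
move=> [_ inc [//|[e0 e1]] _].
by have := inc _ _ Pi0 Pi1 lt01; rewrite e0 e1 ltr10.
Qed.

Lemma rep_indiff c1 u1 c2 u2 z z' : rep c1 u1 -> rep c2 u2 ->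
  is_lottery Pi z -> is_lottery Pi z' -> EU u1 z = EU u1 z' -> EU u2 z = EU u2 z'.
Proof.
move=> r1 r2 hz hz' e; apply/le_anti/andP; split.
  by apply/(rep_const r2 hz' hz)/(rep_const r1 hz' hz); rewrite e.
by apply/(rep_const r2 hz hz')/(rep_const r1 hz hz'); rewrite e.
Qed.

Lemma rep_affine_indiff c1 u1 c2 u2 x y t (s : R) : rep c1 u1 -> rep c2 u2 ->
  Pi x -> Pi y -> Pi t -> 0 <= s <= 1 ->
  s * u1 x + (1 - s) * u1 y = u1 t -> s * u2 x + (1 - s) * u2 y = u2 t.
Proof.
move=> r1 r2 Px Py Pt s01.
have fin v : finite_set (lsupp (dirac v)) by rewrite lsupp_dirac; exact: finite_set1.
have := rep_indiff r1 r2 (mix_lottery s01 (dirac_lottery Px) (dirac_lottery Py))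
  (dirac_lottery Pt).
by rewrite !EU_mix // !EU_dirac.
Qed.

Lemma utility_unique c1 u1 c2 u2 : rep c1 u1 -> rep c2 u2 ->
  forall x, Pi x -> u2 x = u1 x.
Proof.
move=> r1 r2 x Px.
have [a0 a1] := rep_normalised r1; have [b0 b1] := rep_normalised r2.
have transfer := rep_affine_indiff r1 r2.
(* Make x, or one of the reference prizes, indifferent to a mixture of the
   other two, according to where u1 x lies relative to [0, 1]. *)
set t := u1 x.
have [tlt0|tge0] := ltP t 0.
  set s := (1 - t)^-1.
  have st : s * (1 - t) = 1 by rewrite /s mulVf //; lra.
  have s01 : 0 <= s <= 1 by apply/andP; split; nra.
  have := transfer _ _ _ _ Px Pi1 Pi0 s01; rewrite a0 a1 b0 b1 -/t; nra.
have [tgt1|tle1] := ltP 1 t.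
  set s := t^-1.
  have st : s * t = 1 by rewrite /s mulVf //; lra.
  have s01 : 0 <= s <= 1 by apply/andP; split; nra.
  have := transfer _ _ _ _ Px Pi0 Pi1 s01; rewrite a0 a1 b0 b1 -/t; nra.
have t01 : 0 <= t <= 1 by rewrite tge0 tle1.
have := transfer _ _ _ _ Pi1 Pi0 Px t01; rewrite a0 a1 b0 b1 -/t; lra.
Qed.

Lemma value_eq_on c u u' w : (forall x, Pi x -> u' x = u x) -> is_contract Pi w ->
  value c u' w = value c u w.
Proof.
move=> uu hw; rewrite /value; congr ereal_sup; apply: eq_imagel => p _.
by congr (_ + _%:E)%E; apply: eq_bigr => s _; rewrite (eq_EU_on uu).
Qed.

Lemma rep_utility_eq_on c u c' u' : rep c u -> rep c' u' ->
  (forall x, Pi x -> u' x = u x) -> rep c' u.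
Proof.
move=> [_ inc nu _] [cc' _ _ r'] uu; split => // w w' hw hw'.
by rewrite r' // !(value_eq_on _ uu).
Qed.

Section Unbounded.
Variables (c : (S -> R) -> \bar R) (u : R -> R).
Hypotheses (r : rep c u) (ub : unbounded Pi pref).

Lemma EU_unbounded_below (V : R) : exists2 z, is_lottery Pi z & EU u z < V.
Proof.
have [x [y [hx hy /(rep_const_strict r hx hy) yx H]]] := ub.
have D0 : 0 < EU u x - EU u y by rewrite subr_gt0.
have [a [a0 a1 aM]] := exists_weight_lt (EU u x - V) D0.
have a01 : 0 <= a <= 1 by rewrite !ltW.
have [z [_ [hz _ zax _]]] := H a a0 a1.
exists z => //; move: zax.
rewrite (rep_const_strict r hy (mix_lottery a01 hz hx)).
rewrite EU_mix; [move=> zax|exact: lottery_finite hz|exact: lottery_finite hx].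
have : a * (EU u z - V) < 0 by lra.
by rewrite pmulr_rlt0 // subr_lt0.
Qed.

Lemma EU_unbounded_above (V : R) : exists2 z, is_lottery Pi z & V < EU u z.
Proof.
have [x [y [hx hy /(rep_const_strict r hx hy) yx H]]] := ub.
have D0 : 0 < EU u x - EU u y by rewrite subr_gt0.
have [a [a0 a1 aM]] := exists_weight_lt (V - EU u y) D0.
have a01 : 0 <= a <= 1 by rewrite !ltW.
have [_ [z [_ hz _ zay]]] := H a a0 a1.
exists z => //; move: zay.
rewrite (rep_const_strict r (mix_lottery a01 hz hy) hx).
rewrite EU_mix; [move=> zay|exact: lottery_finite hz|exact: lottery_finite hy].
have : 0 < a * (EU u z - V) by lra.
by rewrite pmulr_rgt0 // subr_gt0.
Qed.

Lemma EU_surjective (V : R) : exists2 z, is_lottery Pi z & EU u z = V.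
Proof.
have [z1 h1 lt1] := EU_unbounded_below V; have [z2 h2 lt2] := EU_unbounded_above V.
by apply: (EU_mix_between h1 h2); rewrite !ltW.
Qed.

Lemma contract_surjective (U : S -> R) :
  exists2 w, is_contract Pi w & forall s, EU u (w s) = U s.
Proof.
by exists (fun s => s2val (cid2 (EU_surjective (U s)))) => s; case: cid2.
Qed.

End Unbounded.

Lemma rep_cost_le c1 c2 u : rep c1 u -> rep c2 u -> unbounded Pi pref ->
  forall p, simplex p -> (c2 p <= c1 p)%E.
Proof.
move=> r1 r2 ub p Sp.
have [[c10 [c1g _]] _ _ rep1] := r1; have [[c20 [c2g [c2c c2l]]] _ _ rep2] := r2.
rewrite leNgt; apply/negP => c12.
have d1 : cost_dom c1 p by split => //; apply: lt_le_trans c12 (leey _).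
move: (c12); rewrite (cost_fineK c10 d1) => /fin_lt_between [a c1a ac2].
have [U minor] := affine_minorant c20 c2c (grounded_proper c2g) c2l Sp ac2.
have [w hw ew] := contract_surjective r1 ub U.
set V := \sum_s U s * p s - a.
have [z hz ez] := EU_surjective r1 ub V.
have hz' := const_contract_is_contract hz.
have value2_le : (value c2 u w <= value c2 u (cst z))%E.
  by rewrite value_const // ez; exact: value_le_affine_minorant minor ew.
have value1_gt : (value c1 u (cst z) < value c1 u w)%E.
  apply: lt_le_trans (value_ge c1 u w Sp); rewrite (cost_fineK c10 d1) value_const // ez.
  under eq_bigr do rewrite ew.
  by rewrite -EFinN -EFinD lte_fin /V; lra.
by move: value1_gt; rewrite ltNge => /negP; apply; apply/(rep1 _ _ hz' hw)/rep2.
Qed.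

End Representation.

Unset Implicit Arguments.
Set Strict Implicit.

Theorem proposition2 (R : realType) (S : finType) (Pi : set R) (pi0 pi1 : R)
    (pref : mh_contract R S -> mh_contract R S -> Prop) :
  (0 < #|S|)%N -> convex_set_R Pi -> Pi pi0 -> Pi pi1 -> pi0 < pi1 ->
  moral_hazard_pref Pi pi0 pi1 pref -> unbounded Pi pref ->
  exists c u, parsimonious_rep Pi pi0 pi1 pref c u /\
    forall c' u', parsimonious_rep Pi pi0 pi1 pref c' u' ->
      (forall p, simplex p -> c' p = c p) /\ (forall x, Pi x -> u' x = u x).
Proof.
move=> _ _ Pi0 Pi1 lt01 [c [u r]] ub; exists c, u; split => // c' u' r'.
have u'u := utility_unique Pi0 Pi1 lt01 r r'.
have r'u := rep_utility_eq_on r r' u'u.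
split=> // p Sp; apply/le_anti.
by rewrite (rep_cost_le r'u r ub Sp) (rep_cost_le r r'u ub Sp).
Qed.
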